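(* Let $Y(0),Y(1)$ be integrable real-valued potential outcomes and $X$ a random vector in $\mathbb{R}^{d_X}$ with support $\mathcal{X}$. Suppose: (Deterministic treatment) $\mathcal{X}=\mathcal{X}_0\cup\mathcal{X}_1$ with $\mathcal{X}_0\cap\mathcal{X}_1=\emptyset$, the treatment is $D=1\{X\in\mathcal{X}_1\}$ and the observed outcome is $Y=DY(1)+(1-D)Y(0)$; (Continuity) the functions $x\mapsto E[Y(0)|X=x]$ and $x\mapsto E[Y(1)|X=x]$ are continuous on $\mathcal{X}$; (Comonotonicity) for all $x_1,x_2\in\mathcal{X}$, $$E[Y(0)|X=x_1]\geq E[Y(0)|X=x_2]\iff E[Y(1)|X=x_1]\geq E[Y(1)|X=x_2].$$ Let $\mathcal{F}=\mathrm{cl}(\mathrm{int}(\mathcal{X}_1))\cap\mathrm{cl}(\mathrm{int}(\mathcal{X}_0))$ and, for $d\in\{0,1\}$, let $g_d$ be a function on $\mathcal{X}_d\cup\mathcal{F}$ such that $g_d(x)=E[Y|X=x]$ for all $x\in\mathcal{X}_d$ and $g_d$ is continuous at each point of $\mathcal{F}$. Then: (i) if $d\in\{0,1\}$, $x\in\mathcal{X}_d$ and there exists $x^*\in\mathcal{F}$ with $E[Y|X=x]=g_d(x^* )$, then $E[Y(1)|X=x]=g_1(x^* )$ and $E[Y(0)|X=x]=g_0(x^* )$; (ii) for any $x_1,x_2\in\mathcal{F}$, $g_0(x_1)\geq g_0(x_2)\iff g_1(x_1)\geq g_1(x_2)$.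
   Context: Conditional expectation functions $x\mapsto E[Y(d)|X=x]$ are understood as the unique continuous versions. For $x\in\mathcal{X}_d$, $E[Y|X=x]$ is understood as $E[Y(d)|X=x]$ (since $Y=Y(d)$ when $X\in\mathcal{X}_d$). $\mathrm{int}$ and $\mathrm{cl}$ denote interior and closure in $\mathbb{R}^{d_X}$; $\mathcal{F}$ is called the frontier. *)

From HB Require Import structures.
From mathcomp Require Import all_boot all_order all_algebra.
From mathcomp Require Import all_classical all_reals all_analysis.
Set Implicit Arguments. Unset Strict Implicit. Unset Printing Implicit Defensive.
Import Order.TTheory GRing.Theory Num.Theory.
Import numFieldNormedType.Exports.
Local Open Scope classical_set_scope.
Local Open Scope ring_scope.

Definition rV_borel (R : realType) (n : nat) : set (set 'rV[R]_n) :=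
  <<s (@open 'rV[R]_n) >>.

Section ProbDefs.
Context (R : realType) (d : measure_display) (T : measurableType d)
  (P : probability T R) (n : nat).

Definition random_vector (X : T -> 'rV[R]_n) : Prop :=
  forall B, rV_borel B -> measurable (X @^-1` B).

(* Support of the law of X: points all of whose open neighbourhoods have
   positive probability (= smallest closed set of full probability). *)
Definition law_support (X : T -> 'rV[R]_n) : set 'rV[R]_n :=
  [set x | forall U : set 'rV[R]_n, open U -> U x -> (0 < P (X @^-1` U))%E].

Definition cond_exp_version (Z : T -> R) (X : T -> 'rV[R]_n)
    (m : 'rV[R]_n -> R) : Prop :=
  (forall B : set R, measurable B -> rV_borel (m @^-1` B)) /\
  forall B, rV_borel B ->
    (\int[P]_(w in X @^-1` B) (Z w)%:E = \int[P]_(w in X @^-1` B) (m (X w))%:E)%E.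
End ProbDefs.

Definition frontier_set (R : realType) (n : nat) (X0 X1 : set 'rV[R]_n)
  : set 'rV[R]_n :=
  closure (interior X1) `&` closure (interior X0).

(* The values of g_d on the frontier are not free: a frontier point lies in
   the support of X and in the closure of X_d, and E[Y(d) | X = .] is
   continuous on the support while g_d agrees with it on X_d and is
   continuous there, so uniqueness of limits along X_d forces
   g_d = E[Y(d) | X = .] on the frontier. Both claims are then
   comonotonicity on the support, an equality being two opposite
   inequalities. *)

From HB Require Import structures.
From mathcomp Require Import all_boot all_order all_algebra.
From mathcomp Require Import all_classical all_reals all_analysis.
Set Implicit Arguments. Unset Strict Implicit. Unset Printing Implicit Defensive.
Import Order.TTheory GRing.Theory Num.Theory.
Import numFieldNormedType.Exports.
Local Open Scope classical_set_scope.
Local Open Scope ring_scope.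

Section Comonotone.
Context {dT dU : Order.disp_t} {A : Type} {T : porderType dT} {U : porderType dU}.

Lemma comonotone_eq (S : set A) (f : A -> T) (h : A -> U) x y :
  (forall x1 x2, S x1 -> S x2 -> (f x2 <= f x1 <-> h x2 <= h x1)%O) ->
  S x -> S y -> f x = f y <-> h x = h y.
Proof.
move=> comon Sx Sy; have cxy := comon x y Sx Sy; have cyx := comon y x Sy Sx.
by split=> exy; apply/eqP; rewrite eq_le; apply/andP;
  split; [apply/cyx | apply/cxy | apply/cyx | apply/cxy]; rewrite exy.
Qed.

End Comonotone.

Section WithinLimits.
Context {T U : topologicalType}.

Lemma cvg_within_subset (A B : set T) (f : T -> U) (x : T) (l : U) :
  A `<=` B -> f @ within B (nbhs x) --> l -> f @ within A (nbhs x) --> l.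
Proof. by move=> AB; apply: cvg_trans; apply: cvg_fmap2; apply: within_subset. Qed.

Lemma cvg_within_closure_unique (A : set T) (f g : T -> U) (x : T) (a b : U) :
  hausdorff_space U -> closure A x -> {in A, f =1 g} ->
  f @ within A (nbhs x) --> a -> g @ within A (nbhs x) --> b -> a = b.
Proof.
move=> hU clAx fg fa gb.
have PF : ProperFilter (within A (nbhs x)) := within_nbhs_proper clAx.
by apply: (cvg_unique hU fa); apply: cvg_trans gb; apply: fmap_within_eq.
Qed.

Lemma continuous_within_extension_eq (S A B : set T) (f g : T -> U) (x : T) :
  hausdorff_space U -> A `<=` S -> S x -> closure A x ->
  {within S, continuous f} -> {in A, g =1 f} ->
  g @ within (A `|` B) (nbhs x) --> g x -> g x = f x.
Proof.
move=> hU AS Sx clAx /subspace_continuousP f_cont gf g_cont.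
apply: (@cvg_within_closure_unique A g f x _ _ hU clAx gf).
- exact: cvg_within_subset (subsetUl B) g_cont.
- exact: cvg_within_subset AS (f_cont x Sx).
Qed.

End WithinLimits.

Lemma closed_law_support (R : realType) (d : measure_display)
    (T : measurableType d) (P : probability T R) (n : nat)
    (X : T -> 'rV[R]_n) :
  closed (law_support P X).
Proof.
move=> x clx U oU Ux.
by have [y [suppy Uy]] := clx U (open_nbhs_nbhs (conj oU Ux)); apply: suppy.
Qed.

Lemma frontier_set_closure (R : realType) (n : nat)
    (Xd : bool -> set 'rV[R]_n) (b : bool) :
  frontier_set (Xd false) (Xd true) `<=` closure (Xd b).
Proof.
by case: b => x [cl1 cl0]; [move: cl1 | move: cl0];
  apply: closureS; apply: interior_subset.
Qed.

Lemma frontier_set_law_support (R : realType) (d : measure_display)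
    (T : measurableType d) (P : probability T R) (n : nat)
    (X : T -> 'rV[R]_n) (Xd : bool -> set 'rV[R]_n) :
  law_support P X = Xd false `|` Xd true ->
  frontier_set (Xd false) (Xd true) `<=` law_support P X.
Proof.
move=> supp_eq x /(@frontier_set_closure _ _ _ true) cl1.
apply: (@closed_law_support _ _ _ P _ X x); move: cl1; apply: closureS.
by rewrite supp_eq; apply: subsetUr.
Qed.

(* Index d : bool, with false = 0 (control) and true = 1 (treated). *)
Theorem theorem2 (R : realType) (dm : measure_display) (T : measurableType dm)
  (P : probability T R) (n : nat)
  (Y : bool -> T -> R) (X : T -> 'rV[R]_n)
  (Xd : bool -> set 'rV[R]_n)
  (m : bool -> 'rV[R]_n -> R)
  (g : bool -> 'rV[R]_n -> R) :
  (* integrable potential outcomes, random vector X *)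
  (forall b, P.-integrable setT (fun w => (Y b w)%:E)) ->
  random_vector X ->
  (* m b is the (continuous version of) x |-> E[Y(b) | X = x] *)
  (forall b, cond_exp_version P (Y b) X (m b)) ->
  (* deterministic treatment: support partitioned into X_0, X_1 *)
  law_support P X = Xd false `|` Xd true ->
  Xd false `&` Xd true = set0 ->
  (* continuity on the support *)
  (forall b, {within law_support P X, continuous (m b)}) ->
  (* comonotonicity *)
  (forall x1 x2, law_support P X x1 -> law_support P X x2 ->
     (m false x2 <= m false x1 <-> m true x2 <= m true x1)) ->
  (* g_b agrees with E[Y | X = x] = E[Y(b) | X = x] on X_b ... *)
  (forall b x, Xd b x -> g b x = m b x) ->
  (* ... and g_b, as a function on X_b ∪ F, is continuous at each point of F *)
  (forall b x, frontier_set (Xd false) (Xd true) x ->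
     (g b @ within (Xd b `|` frontier_set (Xd false) (Xd true)) (nbhs x))
       --> g b x) ->
  (* (i) *)
  (forall b x xs, Xd b x -> frontier_set (Xd false) (Xd true) xs ->
     m b x = g b xs -> m true x = g true xs /\ m false x = g false xs) /\
  (* (ii) *)
  (forall x1 x2, frontier_set (Xd false) (Xd true) x1 ->
     frontier_set (Xd false) (Xd true) x2 ->
     (g false x2 <= g false x1 <-> g true x2 <= g true x1)).
Proof.
move=> _ _ _ supp_eq _ m_cont comon g_m g_cont.
set F := frontier_set (Xd false) (Xd true).
have Xd_supp b : Xd b `<=` law_support P X.
  by rewrite supp_eq; case: b => x Xx; [right | left].
have F_supp : F `<=` law_support P X := frontier_set_law_support supp_eq.
have g_m_F b xs : F xs -> g b xs = m b xs.
  move=> Fxs; apply: (@continuous_within_extension_eq _ _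
    (law_support P X) (Xd b) F (m b) (g b) xs (@Rhausdorff R) (Xd_supp b)).
  - exact: F_supp Fxs.
  - exact: (@frontier_set_closure _ _ Xd b xs Fxs).
  - exact: m_cont.
  - by move=> y; rewrite inE => /g_m.
  - exact: g_cont.
split.
- move=> b x xs Xx Fxs; rewrite !g_m_F // => eq_b.
  have := comonotone_eq comon (Xd_supp _ _ Xx) (F_supp _ Fxs).
  by case: b eq_b {Xx} => eq_b [eq01 eq10]; split; [| apply: eq10 | apply: eq01 |].
- by move=> x1 x2 F1 F2; rewrite !g_m_F //; apply: comon; apply: F_supp.
Qed.
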